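(* Let $n\ge1$, let $q_1,q_2$ be powers of a prime $p$, $q=q_1\otimes q_2$, and $R=A(n,q_1,q_2)$. Let $S$ be the subring of block-diagonal elements $\begin{pmatrix} A & 0\\ 0 & b\end{pmatrix}$ ($A\in M_n(\mathbb{F}_{q_1})$, $b\in\mathbb{F}_{q_2}$) and $J$ the set of elements $\begin{pmatrix} 0 & v\\ 0 & 0\end{pmatrix}$ ($v\in M_{n\times1}(\mathbb{F}_q)$). For $x\in J$ let $C_S(x)=\{s\in S: sx=xs\}$. Let $\mathcal{M}$ be a set of maximal subrings of $S$ of smallest possible cardinality such that $$\bigcup_{x\in J\setminus\{0\}} C_S(x)\subseteq\bigcup_{M\in\mathcal{M}} M,$$ and let $\mathscr{Z}=\{M\oplus J: M\in\mathcal{M}\}$. Then: (1) $\mathscr{S}(R)\cup\mathscr{Z}$ is a cover of $R$; (2) if $R$ is $\sigma$-elementary, then $\mathscr{S}(R)\cup\mathscr{Z}$ is a minimal cover of $R$; (3) $|\mathscr{Z}|\le (|J|-1)/(q-1)=(q^n-1)/(q-1)$; (4) if $R$ is $\sigma$-elementary, then $q^n+1\le\sigma(R)\le (q^{n+1}-1)/(q-1)$.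
   Context: Rings are associative and need not have an identity; a subring is an additive subgroup closed under multiplication. A cover of a ring $R$ is a collection of proper subrings of $R$ whose union is $R$; $\sigma(R)$ is the minimum cardinality of a cover ($\infty$ if none exists), and a minimal cover is one of cardinality $\sigma(R)$. $R$ is $\sigma$-elementary if $\sigma(R)<\sigma(R/I)$ for every nonzero two-sided ideal $I$. For powers $q_1=p^{d_1}$, $q_2=p^{d_2}$ of a prime $p$, $q_1\otimes q_2:=p^{\operatorname{lcm}(d_1,d_2)}$; $\mathbb{F}_{q_1},\mathbb{F}_{q_2}$ are subfields of $\mathbb{F}_q$. $A(n,q_1,q_2)$ is the subring of $M_{n+1}(\mathbb{F}_q)$ of all block matrices $\begin{pmatrix} A & v\\ 0 & b\end{pmatrix}$ with $A\in M_n(\mathbb{F}_{q_1})$, $v\in M_{n\times 1}(\mathbb{F}_q)$, $b\in\mathbb{F}_{q_2}$. $J$ is the Jacobson radical of $R$, and $\mathscr{S}(R)$ is the set of all semisimple complements to $J$ in $R$, i.e. $\mathbb{F}_p$-subalgebras $T$ of $R$ with $R=T\oplus J$; these are exactly the conjugates $(1+x)^{-1}S(1+x)$, $x\in J$. For a subring $M$ of $S$, $M\oplus J=\{m+x: m\in M, x\in J\}$. *)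

From HB Require Import structures.
From mathcomp Require Import all_boot all_order all_algebra.
Set Implicit Arguments. Unset Strict Implicit. Unset Printing Implicit Defensive.
Import GRing.Theory.
Local Open Scope ring_scope.

Section Generic.
Variables (F : finFieldType) (m : nat).
Local Notation T := 'M[F]_m.

Definition is_subring (A : {set T}) : Prop :=
  0 \in A /\ (forall x y, x \in A -> y \in A -> x - y \in A) /\
  (forall x y, x \in A -> y \in A -> x * y \in A).

Definition proper_subring (R A : {set T}) : Prop :=
  is_subring A /\ A \proper R.

Definition is_ideal (R I : {set T}) : Prop :=
  I \subset R /\ 0 \in I /\ (forall x y, x \in I -> y \in I -> x - y \in I) /\
  (forall r x, r \in R -> x \in I -> r * x \in I /\ x * r \in I).

(* C is a cover of R/I, expressed (correspondence theorem) as a collection of proper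
   subrings of R all containing I whose union is R.  For I = {0} this is a cover of R. *)
Definition cover_mod (R I : {set T}) (C : {set {set T}}) : Prop :=
  (forall A, A \in C -> proper_subring R A /\ I \subset A) /\
  \bigcup_(A in C) A = R.

Definition is_cover (R : {set T}) (C : {set {set T}}) : Prop :=
  cover_mod R [set 0] C.

(* sigma(R/I) = k  (a finite value); sigma(R/I) = infinity iff no k satisfies this *)
Definition is_sigma_mod (R I : {set T}) (k : nat) : Prop :=
  (exists C, cover_mod R I C /\ #|C| = k) /\
  (forall C, cover_mod R I C -> (k <= #|C|)%N).

Definition is_sigma (R : {set T}) (k : nat) : Prop := is_sigma_mod R [set 0] k.

Definition is_minimal_cover (R : {set T}) (C : {set {set T}}) : Prop :=
  is_cover R C /\ forall C', is_cover R C' -> (#|C| <= #|C'|)%N.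

(* sigma(R) < sigma(R/I) for every nonzero two-sided ideal I (infinity is largest) *)
Definition sigma_elementary (R : {set T}) : Prop :=
  forall I, is_ideal R I -> I != [set 0] ->
    exists k, is_sigma R k /\ forall k', is_sigma_mod R I k' -> (k < k')%N.

Definition maximal_subring (S M : {set T}) : Prop :=
  proper_subring S M /\
  forall N, proper_subring S N -> M \subset N -> N = M.

(* semisimple complements of J in R: subrings (= F_p-subalgebras in characteristic p)
   T0 with R = T0 (+) J, i.e. every r in R is uniquely t + x, t in T0, x in J *)
Definition complements (R J : {set T}) : {set {set T}} :=
  [set T0 : {set T} | [&& T0 \subset R,
     [forall x, forall y, (x \in T0) ==> (y \in T0) ==> (x - y \in T0) && (x * y \in T0)],
     (0 \in T0),
     T0 :&: J == [set 0] &
     [forall r, (r \in R) == [exists t, exists x, [&& t \in T0, x \in J & r == t + x]]]]].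

Definition oplusJ (M J : {set T}) : {set T} := [set m + x | m in M, x in J].

Definition centr (S : {set T}) (x : T) : {set T} := [set s in S | s * x == x * s].

End Generic.

Section Arings.
Variables (F : finFieldType) (n : nat).

(* F_{q'} as the (unique) subfield of F of order q' (q' | ... ), i.e. {x | x^q' = x} *)
Definition subF (q' : nat) : {set F} := [set x : F | x ^+ q' == x].

Definition Aring (q1 q2 : nat) : {set 'M[F]_(n + 1)} :=
  [set X | [exists A : 'M[F]_n, exists v : 'M[F]_(n, 1), exists b : F,
     [&& [forall i, forall j, A i j \in subF q1], b \in subF q2 &
         X == block_mx A v 0 b%:M]]].

Definition Sdiag (q1 q2 : nat) : {set 'M[F]_(n + 1)} :=
  [set X | [exists A : 'M[F]_n, exists b : F,
     [&& [forall i, forall j, A i j \in subF q1], b \in subF q2 &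
         X == block_mx A 0 0 b%:M]]].

Definition Jrad : {set 'M[F]_(n + 1)} :=
  [set X | [exists v : 'M[F]_(n, 1), X == block_mx 0 v 0 0]].

End Arings.

From HB Require Import structures.
From mathcomp Require Import all_boot all_order all_algebra all_field zify.
From Stdlib Require Import Classical ClassicalEpsilon.

Set Implicit Arguments.
Unset Strict Implicit.
Unset Printing Implicit Defensive.
Import GRing.Theory.
Local Open Scope ring_scope.

(* J is the square-zero ideal of the matrices (0 v; 0 0), S is a complement of J, and
   the complements of J are exactly the conjugates T_w = (1 - x_w) S (1 + x_w) of S,
   where x_w = (0 w; 0 0) and w ranges over F_q^n.  An element (A v; 0 b) of R lies in
   some T_w iff v is in the image of A - b; otherwise A - b is singular, so (A 0; 0 b)
   centralizes a nonzero x in J and lies in some M (+) J.  As C_S(x) only depends on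
   the line F_q x, (q^n - 1)/(q - 1) maximal subrings of S suffice.
   For the lower bound: F_q is generated as a ring by F_q1 and F_q2, so a subring of R
   mapping onto S = R/J is either R or a complement of J.  If a minimal cover of R
   missed some T_w, pulling it back along the conjugation by 1 + x_w would cover R/J
   with as many proper subrings, against sigma(R) < sigma(R/J); the other members of
   the cover map to proper subrings of S, whose maximal enlargements form an
   admissible family, so the cover has at least q^n + |Mc| members. *)

(** * Subfields of a finite field *)

Lemma subF1 (F : finFieldType) q : 1 \in subF F q.
Proof. by rewrite inE expr1n. Qed.

Lemma subFM (F : finFieldType) q : {in subF F q &, forall x y, x * y \in subF F q}.
Proof. by move=> x y; rewrite !inE exprMn => /eqP -> /eqP ->. Qed.

Section FrobeniusFixedPoints.
Variables (F : finFieldType) (p : nat).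
Hypothesis pcF : p \in [pchar F].

Lemma pnat_pcharX (R : nzRingType) :
  p \in [pchar R] -> forall d : nat, [pchar R].-nat (p ^ d)%N.
Proof.
move=> pcR d; have p_pr := pcharf_prime pcR.
by rewrite (eq_pnat _ (pcharf_eq pcR)) pnatX pnatE ?inE ?eqxx.
Qed.

Lemma subF0 d : 0 \in subF F (p ^ d).
Proof. by rewrite inE expr0n expn_eq0 eqn0Ngt prime_gt0 // (pcharf_prime pcF). Qed.

Lemma subFB d : {in subF F (p ^ d) &, forall x y, x - y \in subF F (p ^ d)}.
Proof.
move=> x y; rewrite !inE => /eqP xq /eqP yq.
by rewrite exprDn_pchar ?exprNn_pchar ?pnat_pcharX // xq yq.
Qed.

Lemma subFD d : {in subF F (p ^ d) &, forall x y, x + y \in subF F (p ^ d)}.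
Proof.
by move=> x y xF yF; have := subFB xF (subFB (subF0 d) yF); rewrite sub0r opprK.
Qed.

Lemma dvdp_frobX d m : ('X^(p ^ d) - 'X : {poly F}) %| 'X^(p ^ (d * m)) - 'X.
Proof.
have pcP : p \in [pchar {poly F}] by rewrite pchar_poly.
elim: m => [|m IHm]; first by rewrite muln0 expn0 expr1 subrr dvdp0.
have -> : 'X^(p ^ (d * m.+1)) - 'X =
    ('X^(p ^ (d * m)) - 'X) ^+ (p ^ d) + ('X^(p ^ d) - 'X) :> {poly F}.
  rewrite exprDn_pchar ?exprNn_pchar ?pnat_pcharX // -exprM -expnD mulnS addnC.
  by rewrite addrA subrK.
rewrite dvdp_addl ?dvdpp // (dvdp_trans IHm) // -[X in X %| _]expr1 dvdp_exp2l //.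
by rewrite expn_gt0 prime_gt0 // (pcharf_prime pcF).
Qed.

Lemma card_subF d L : (0 < d)%N -> (d %| L)%N -> #|F| = (p ^ L)%N ->
  #|subF F (p ^ d)| = (p ^ d)%N.
Proof.
move=> d_gt0 /dvdnP [m ->] cardF.
have := dvdp_frobX d m; rewrite mulnC -cardF finField_genPoly.
case/dvdp_prod_XsubC => msk eq_msk.
have memF x : (x \in subF F (p ^ d)) = (x \in mask msk (index_enum F)).
  by rewrite inE -root_prod_XsubC -(eqp_root eq_msk) rootE !hornerE subr_eq0.
rewrite (eq_card memF) (card_uniqP _) ?mask_uniq ?index_enum_uniq //.
have p_gt1 := prime_gt1 (pcharf_prime pcF).
have pd_gt1 : (1 < p ^ d)%N by rewrite -{1}(expn0 p) ltn_exp2l.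
have := eqp_size eq_msk; rewrite size_prod_XsubC.
by rewrite size_polyDl ?size_polyXn ?size_polyN ?size_polyX // => -[].
Qed.

End FrobeniusFixedPoints.

Lemma mul_delta_cV (R : pzSemiRingType) n (i j : 'I_n) (u : 'cV[R]_n) :
  delta_mx i j *m u = u j 0 *: delta_mx i 0.
Proof.
apply/matrixP => k l; rewrite !mxE (bigD1 j) //= big1 => [|l' nl']; rewrite !mxE.
  rewrite (ord1 l) eqxx !andbT addr0.
  by case: (k == i); rewrite ?mul1r ?mulr1 ?mul0r ?mulr0.
by rewrite (negbTE nl') andbF mul0r.
Qed.

Section Generation.
Variables (F : finFieldType) (p d1 d2 : nat).
Hypothesis pcF : p \in [pchar F].
Hypotheses (d1_gt0 : (0 < d1)%N) (d2_gt0 : (0 < d2)%N).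
Hypothesis cardF : #|F| = (p ^ lcmn d1 d2)%N.
Local Notation Fp_F := (pPrimeCharType pcF).

Lemma span_zmod_closed (K : {set F}) : 0 \in K -> {in K &, forall x y, x - y \in K} ->
  forall x : Fp_F, (x \in <<(enum K : seq Fp_F)>>%VS) = (x \in K).
Proof.
move=> K0 KB; have KD : {in K &, forall x y, x + y \in K}.
  by move=> x y xK yK; have := KB _ _ xK (KB _ _ K0 yK); rewrite sub0r opprK.
move=> x; apply/idP/idP => [xU | xK]; last by apply: memv_span; rewrite mem_enum.
rewrite (coord_span (X := in_tuple (enum K : seq Fp_F)) xU).
apply: (big_ind (fun y : Fp_F => y \in K)) => // i _.
have : (in_tuple (enum K : seq Fp_F))`_i \in K by rewrite -mem_enum mem_nth ?size_tuple.
move: (_`_i) => y yK; rewrite /GRing.scale /= /pprimeChar_scale mulr_natl.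
by elim: (val _) => [|k IHk]; rewrite ?mulr0n // mulrS KD.
Qed.

Lemma subring_aspace (K : {set F}) : 1 \in K -> {in K &, forall x y, x - y \in K} ->
  {in K &, forall x y, x * y \in K} ->
  exists U : {aspace Fp_F}, forall x, (x \in U) = (x \in K).
Proof.
move=> K1 KB KM; have K0 : 0 \in K by rewrite -(subrr 1) KB.
have memU := span_zmod_closed K0 KB.
have Ualg : is_aspace <<(enum K : seq Fp_F)>>%VS.
  rewrite /is_aspace has_algid1 ?memU //=.
  by apply/prodvP => u v; rewrite !memU; apply: KM.
by exists (ASpace Ualg).
Qed.

Lemma subring_eqT (K : {set F}) : 1 \in K -> {in K &, forall x y, x - y \in K} ->
  {in K &, forall x y, x * y \in K} ->
  subF F (p ^ d1) \subset K -> subF F (p ^ d2) \subset K -> K = setT.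
Proof.
move=> K1 KB KM sF1K sF2K; have [U memU] := subring_aspace K1 KB KM.
have p_gt1 := prime_gt1 (pcharf_prime pcF).
have cardU (V : {aspace Fp_F}) (A : {set F}) : (forall x, (x \in V) = (x \in A)) ->
    #|A| = (p ^ \dim V)%N.
  by move=> memV; rewrite -(eq_card memV) card_vspace card_Fp ?(pcharf_prime pcF).
have dvd_dimU d : (0 < d)%N -> (d %| lcmn d1 d2)%N -> subF F (p ^ d) \subset K ->
    (d %| \dim U)%N.
  move=> d_gt0 d_dvd sFK.
  have [V memV] := subring_aspace (subF1 F _) (subFB pcF (d := d)) (@subFM F _).
  have sVU : (V <= U)%VS by apply/subvP => x; rewrite memV memU; apply: (subsetP sFK).
  have := cardU _ _ memV; rewrite (card_subF pcF d_gt0 d_dvd cardF) => /expnI-> //.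
  exact: field_dimS.
have lcm_dvd : (lcmn d1 d2 %| \dim U)%N by rewrite dvdn_lcm !dvd_dimU ?dvdn_lcml ?dvdn_lcmr.
have dimU_gt0 : (0 < \dim U)%N.
  by rewrite lt0n dimv_eq0; apply: contraTneq K1 => U0; rewrite -memU U0 memv0 oner_eq0.
apply/eqP; rewrite eqEcard subsetT cardsT cardF (cardU _ _ memU) leq_exp2l //.
exact: dvdn_leq.
Qed.

Lemma scalars_eqT (K : {set F}) : 1 \in K -> {in K &, forall x y, x - y \in K} ->
  {in subF F (p ^ d1) & K, forall a x, a * x \in K} ->
  {in subF F (p ^ d2) & K, forall a x, a * x \in K} -> K = setT.
Proof.
move=> K1 KB F1K F2K.
pose stab := [set c | [forall x in K, c * x \in K]].
have stabP c : reflect {in K, forall x, c * x \in K} (c \in stab).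
  by rewrite inE; apply: (iffP forall_inP).
have stabT : stab = setT.
  apply: subring_eqT.
  - by apply/stabP => x; rewrite mul1r.
  - move=> a b /stabP aK /stabP bK; apply/stabP => x xK.
    by rewrite mulrBl KB ?aK ?bK.
  - by move=> a b /stabP aK /stabP bK; apply/stabP => x xK; rewrite -mulrA aK ?bK.
  - by apply/subsetP => a aF; apply/stabP => x; apply: F1K.
  - by apply/subsetP => a aF; apply/stabP => x; apply: F2K.
apply/setP => c; rewrite inE; have /stabP/(_ 1 K1) : c \in stab by rewrite stabT inE.
by rewrite mulr1.
Qed.

Lemma cV_submod_eqT n (W : {set 'cV[F]_n}) u :
  0 \in W -> {in W &, forall x y, x - y \in W} ->
  {in mxOver (subF F (p ^ d1)) & W, forall A v, A *m v \in W} ->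
  {in subF F (p ^ d2) & W, forall b v, b *: v \in W} ->
  u \in W -> u != 0 -> W = setT.
Proof.
move=> W0 WB WA Wb uW /matrix0Pn [j [l]]; rewrite (ord1 l) => u_j.
have WD : {in W &, forall x y, x + y \in W}.
  by move=> x y xW yW; have := WB _ _ xW (WB _ _ W0 yW); rewrite sub0r opprK.
pose K := [set k | [forall i, (k * u j 0) *: delta_mx i (0 : 'I_1) \in W]].
have KP k : reflect (forall i, (k * u j 0) *: delta_mx i 0 \in W) (k \in K).
  by rewrite inE; apply: forallP.
have KT : K = setT.
  apply: scalars_eqT.
  - apply/KP => i; rewrite mul1r -mul_delta_cV WA //.
    by apply/mxOverP => a b; rewrite mxE; case: (_ && _); rewrite ?subF1 ?subF0.
  - move=> x y /KP xK /KP yK; apply/KP => i.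
    by rewrite mulrBl scalerBl WB.
  - move=> a k aF /KP kK; apply/KP => i.
    rewrite -mulrA -scalerA -mul_scalar_mx WA //.
    by apply/mxOverP => a' b; rewrite mxE; case: (_ == _); rewrite ?subF0.
  - by move=> a k aF /KP kK; apply/KP => i; rewrite -mulrA -scalerA Wb.
apply/setP => v; rewrite inE (matrix_sum_delta v).
apply: (big_ind (fun y => y \in W)) => // i _.
apply: (big_ind (fun y => y \in W)) => // l' _; rewrite (ord1 l').
have /KP/(_ i) : v i 0 / u j 0 \in K by rewrite KT inE.
by rewrite mulfVK.
Qed.

End Generation.

(** * Subrings, ideals and complements *)

Lemma ex_argmin (X : Type) (P : X -> Prop) (f : X -> nat) :
  (exists x, P x) -> exists2 x, P x & forall y, P y -> (f x <= f y)%N.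
Proof.
case=> x Px; have := leqnn (f x); move: {2}(f x) => k.
elim: k x Px => [|k IHk] x Px le_fx.
  by exists x => // y _; move: le_fx; rewrite leqn0 => /eqP->.
have [[y Py lt_fy] | no_lt] := classic (exists2 y, P y & (f y < f x)%N).
  by apply: (IHk y Py); rewrite -ltnS (leq_trans lt_fy).
by exists x => // y Py; rewrite leqNgt; apply/negP => lt_fy; apply: no_lt; exists y.
Qed.

Lemma card_fibres_leq (I J : finType) (f : I -> J) (D : {set I}) k :
  (forall x, x \in D -> k <= #|[set y in D | f y == f x]|)%N ->
  (#|f @: D| * k <= #|D|)%N.
Proof.
move=> fibreD; rewrite -[X in (_ <= X)%N]sum1_card (partition_big_imset f) /= -sum_nat_const.
apply: leq_sum => _ /imsetP [x xD ->]; rewrite sum1_card.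
by apply: leq_trans (fibreD x xD) _; apply: subset_leq_card; apply/subsetP => y; rewrite !inE.
Qed.

Section Subrings.
Variables (F : finFieldType) (m : nat).
Local Notation T := 'M[F]_m.
Implicit Types (A C I J M N R S Y : {set T}) (f : T -> T).

Lemma subringD A : is_subring A -> {in A &, forall x y, x + y \in A}.
Proof.
by move=> [A0 [AB _]] x y xA yA; have := AB _ _ xA (AB _ _ A0 yA); rewrite sub0r opprK.
Qed.

Lemma subringI A C : is_subring A -> is_subring C -> is_subring (A :&: C).
Proof.
move=> [A0 [AB AM]] [C0 [CB CM]]; split; first by rewrite inE A0.
by split=> x y /setIP [xA xC] /setIP [yA yC]; rewrite inE ?AB ?AM ?CB ?CM.
Qed.

Lemma subring_imset f A : is_subring A -> f 0 = 0 ->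
  {in A &, {morph f : x y / x - y}} -> {in A &, {morph f : x y / x * y}} ->
  is_subring (f @: A).
Proof.
move=> [A0 [AB AM]] f0 fB fM; split; first by rewrite -f0 imset_f.
by split=> _ _ /imsetP [x xA ->] /imsetP [y yA ->]; rewrite -?fB -?fM ?imset_f ?AB ?AM.
Qed.

Lemma subring_preimset f S Y : is_subring S -> is_subring Y -> f 0 = 0 ->
  {in S &, {morph f : x y / x - y}} -> {in S &, {morph f : x y / x * y}} ->
  is_subring [set x in S | f x \in Y].
Proof.
move=> [S0 [SB SM]] [Y0 [YB YM]] f0 fB fM; split; first by rewrite inE S0 f0.
split=> x y; rewrite !inE => /andP [xS fxY] /andP [yS fyY].
  by rewrite SB ?fB ?YB.
by rewrite SM ?fM ?YM.
Qed.

Lemma in_centr S x s : (s \in centr S x) = (s \in S) && (s * x == x * s).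
Proof. by rewrite /centr in_set. Qed.

Lemma ex_maximal_subring S C : proper_subring S C ->
  exists2 M, maximal_subring S M & C \subset M.
Proof.
move=> pC; pose P N := proper_subring S N /\ C \subset N.
have [M [pM sCM] maxM] :=
  ex_argmin (fun N => #|~: N|) (ex_intro P C (conj pC (subxx C))).
exists M => //; split => // N pN sMN; apply/eqP; rewrite eq_sym eqEcard sMN /=.
rewrite -(leq_add2r #|~: M|) cardsC -(cardsC N) leq_add2l.
by apply: maxM; split; last exact: subset_trans sMN.
Qed.

Definition maxsub S C : {set T} :=
  epsilon (inhabits set0) (fun M => maximal_subring S M /\ C \subset M).

Lemma maxsubP S C : proper_subring S C ->
  maximal_subring S (maxsub S C) /\ C \subset maxsub S C.
Proof.
move=> /ex_maximal_subring [M maxM sCM].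
by apply: (epsilon_spec _ (fun M => maximal_subring S M /\ C \subset M)); exists M.
Qed.

Lemma cover_mod_sigma R I (C : {set {set T}}) :
  cover_mod R I C -> exists2 k, is_sigma_mod R I k & (k <= #|C|)%N.
Proof.
move=> covC.
have [C' covC' minC'] := ex_argmin (fun D : {set {set T}} => #|D|) (ex_intro _ C covC).
by exists #|C'|; [split; first exists C' | apply: minC'].
Qed.

Lemma ideal_subring R J : is_ideal R J -> is_subring J.
Proof.
move=> [sJR [J0 [JB JM]]]; do 2!split => //.
by move=> x y xJ yJ; case: (JM x y (subsetP sJR x xJ) yJ).
Qed.

Lemma oplusJ_subring R J Y : is_ideal R J -> Y \subset R -> is_subring Y ->
  is_subring (oplusJ Y J).
Proof.
move=> idJ sYR [Y0 [YB YM]]; have [sJR [J0 [JB JM]]] := idJ.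
have JD := subringD (ideal_subring idJ).
split; first by apply/imset2P; exists 0 0; rewrite ?addr0.
split=> _ _ /imset2P [y x yY xJ ->] /imset2P [y' x' yY' xJ' ->]; apply/imset2P.
  by exists (y - y') (x - x'); rewrite ?YB ?JB // opprD addrACA.
have [yx'J _] := JM _ _ (subsetP sYR _ yY) xJ'.
have [_ xy'J] := JM _ _ (subsetP sYR _ yY') xJ.
have [xx'J _] := JM _ _ (subsetP sJR _ xJ) xJ'.
exists (y * y') (y * x' + x * y' + x * x'); rewrite ?YM ?JD //.
by rewrite mulrDl !mulrDr !addrA.
Qed.

Lemma oplusJ_sub R J Y : is_subring R -> J \subset R -> Y \subset R -> oplusJ Y J \subset R.
Proof.
move=> subR sJR sYR; apply/subsetP => _ /imset2P [y x yY xJ ->].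
by apply: (subringD subR); [apply: (subsetP sYR) | apply: (subsetP sJR)].
Qed.

Lemma sub_oplusJl J Y : 0 \in J -> Y \subset oplusJ Y J.
Proof. by move=> J0; apply/subsetP => y yY; apply/imset2P; exists y 0; rewrite ?addr0. Qed.

Lemma sub_oplusJr J Y : 0 \in Y -> J \subset oplusJ Y J.
Proof. by move=> Y0; apply/subsetP => x xJ; apply/imset2P; exists 0 x; rewrite ?add0r. Qed.

Lemma oplusJIl S J M : is_subring S -> M \subset S -> S :&: J = [set 0] ->
  oplusJ M J :&: S = M.
Proof.
move=> [_ [SB _]] sMS SJ0.
have J0 : 0 \in J by have := set11 (0 : T); rewrite -SJ0 => /setIP [].
apply/eqP; rewrite eqEsubset [M \subset _]subsetI sMS (sub_oplusJl M J0) !andbT.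
apply/subsetP => _ /setIP [/imset2P [y x yM xJ ->] yxS].
have : x \in S :&: J.
  by rewrite inE xJ andbT -(addKr y x) addrC SB // (subsetP sMS).
by rewrite SJ0 inE => /eqP->; rewrite addr0.
Qed.

Lemma complementsP R J T0 : is_subring R -> J \subset R ->
  T0 \in complements R J <->
  [/\ T0 \subset R, is_subring T0, T0 :&: J = [set 0] & oplusJ T0 J = R].
Proof.
move=> subR sJR; rewrite inE; split.
  case/and5P => sT0R /forallP T0cl T00 /eqP T0J /forallP T0R.
  have T0cl2 x y : x \in T0 -> y \in T0 -> (x - y \in T0) && (x * y \in T0).
    by move=> xT yT; apply: (implyP (implyP (forallP (T0cl x) y) xT)).
  have subT0 : is_subring T0.
    by split=> //; split=> x y xT yT; case/andP: (T0cl2 x y xT yT).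
  split=> //; apply/eqP; rewrite eqEsubset oplusJ_sub //=.
  apply/subsetP => r rR; have /eqP := T0R r; rewrite rR => /esym/existsP [t /existsP [x]].
  by case/and3P => tT xJ /eqP->; apply/imset2P; exists t x.
case=> sT0R [T00 [T0B T0M]] T0J T0R; apply/and5P; split => //; last 2 first.
- by rewrite T0J.
- apply/forallP => r; rewrite -T0R; apply/eqP; apply/idP/idP.
  + case/imset2P => t x tT xJ ->; apply/existsP; exists t; apply/existsP; exists x.
    by rewrite tT xJ eqxx.
  + by case/existsP => t /existsP [x /and3P [tT xJ /eqP->]]; apply: imset2_f.
apply/forallP => x; apply/forallP => y; apply/implyP => xT; apply/implyP => yT.
by rewrite T0B ?T0M.
Qed.

Lemma complements_sub_eq R J T0 T1 : is_subring R -> J \subset R ->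
  T0 \in complements R J -> T1 \in complements R J -> T0 \subset T1 -> T0 = T1.
Proof.
move=> subR sJR /(complementsP _ subR sJR) [_ _ _ T0R].
move=> /(complementsP _ subR sJR) [sT1R [_ [T1B _]] T1J _] sT01.
apply/eqP; rewrite eqEsubset sT01; apply/subsetP => t1 t1T.
move: (subsetP sT1R _ t1T); rewrite -T0R => /imset2P [t0 x t0T xJ Et1].
have /set1P x0 : x \in [set 0 : T].
  rewrite -T1J inE xJ andbT -(addKr t0 x) addrC -Et1.
  by apply: T1B => //; apply: (subsetP sT01).
by rewrite Et1 x0 addr0.
Qed.

Lemma complement_proper R J T0 : is_subring R -> J \subset R ->
  T0 \in complements R J -> J != [set 0] -> proper_subring R T0.
Proof.
move=> subR sJR /(complementsP _ subR sJR) [sT0R subT0 T0J _] J_neq0; split => //.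
rewrite properE sT0R; apply: contra J_neq0 => sRT0.
rewrite -T0J; apply/eqP/setP => x; rewrite in_setI andb_idl //.
by move=> /(subsetP sJR)/(subsetP sRT0).
Qed.

End Subrings.

(** * The ring A(n, q1, q2) *)

Section UpperTriangularBlocks.
Variables (F : comNzRingType) (n : nat).
Implicit Types (A : 'M[F]_n) (v : 'cV[F]_n) (b : F).

Definition utri A v b : 'M[F]_(n + 1) := block_mx A v 0 b%:M.

Lemma utri_mul A v b A' v' b' :
  utri A v b * utri A' v' b' = utri (A *m A') (A *m v' + b' *: v) (b * b').
Proof.
rewrite /utri -mulmxE mulmx_block !mulmx0 !mul0mx !addr0 !add0r.
by rewrite mul_mx_scalar scalar_mxM.
Qed.

Lemma utriD A v b A' v' b' :
  utri A v b + utri A' v' b' = utri (A + A') (v + v') (b + b').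
Proof. by rewrite /utri add_block_mx addr0 [in RHS]raddfD. Qed.

Lemma utriN A v b : - utri A v b = utri (- A) (- v) (- b).
Proof. by rewrite /utri opp_block_mx oppr0 [in RHS]raddfN. Qed.

Lemma utriB A v b A' v' b' :
  utri A v b - utri A' v' b' = utri (A - A') (v - v') (b - b').
Proof. by rewrite utriN utriD. Qed.

Lemma utriZ c A v b : c *: utri A v b = utri (c *: A) (c *: v) (c * b).
Proof. by rewrite /utri scale_block_mx scaler0 scale_scalar_mx. Qed.

Lemma utri0 : utri 0 0 0 = 0.
Proof. by rewrite /utri [_%:M]raddf0 block_mx0. Qed.

Lemma utri1 : utri 1%:M 0 1 = 1.
Proof. by rewrite /utri [RHS]scalar_mx_block. Qed.

Lemma utri_inj A v b A' v' b' :
  utri A v b = utri A' v' b' -> [/\ A = A', v = v' & b = b'].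
Proof.
case/eq_block_mx => -> -> _ /(congr1 (fun M : 'M[F]_1 => M 0 0)).
by rewrite !mxE /= !mulr1n.
Qed.

End UpperTriangularBlocks.

Section ARing.
Variables (F : finFieldType) (n p d1 d2 : nat).
Hypothesis pcF : p \in [pchar F].
Local Notation T := 'M[F]_(n + 1).
Local Notation F1 := (subF F (p ^ d1)).
Local Notation F2 := (subF F (p ^ d2)).
Local Notation R := (Aring F n (p ^ d1) (p ^ d2)).
Local Notation S := (Sdiag F n (p ^ d1) (p ^ d2)).
Local Notation J := (Jrad F n).
Local Notation utri := (@utri F n).
Implicit Types (A : 'M[F]_n) (v w : 'cV[F]_n) (b : F) (X : T) (Y M : {set T}).

Lemma mxOverB_subF : {in mxOver F1 &, forall A A', A - A' \is a mxOver F1}.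
Proof.
move=> A A' /mxOverP AF /mxOverP A'F; apply/mxOverP => i j.
by rewrite !mxE subFB.
Qed.

Lemma mxOverM_subF : {in mxOver F1 &, forall A A', A *m A' \is a mxOver F1}.
Proof.
move=> A A' /mxOverP AF /mxOverP A'F; apply/mxOverP => i j; rewrite mxE.
apply: (big_ind (fun x => x \in F1)); [exact: subF0 | exact: subFD | move=> k _].
exact: subFM.
Qed.

Lemma mxOver0_subF : (0 : 'M[F]_n) \is a mxOver F1.
Proof. by rewrite mxOver0 ?subF0. Qed.

Lemma mxOver1_subF : (1%:M : 'M[F]_n) \is a mxOver F1.
Proof. by rewrite mxOver_scalar ?subF0 ?subF1. Qed.

Lemma mxOver_subFE A : (A \is a mxOver F1) = [forall i, forall j, A i j \in F1].
Proof. by []. Qed.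

Lemma AringP X :
  reflect (exists A v b, [/\ A \is a mxOver F1, b \in F2 & X = utri A v b]) (X \in R).
Proof.
rewrite inE; apply: (iffP existsP) => [[A /existsP [v /existsP [b]]] | [A [v [b [AF bF ->]]]]].
  by rewrite -mxOver_subFE => /and3P [AF bF /eqP->]; exists A, v, b.
exists A; apply/existsP; exists v; apply/existsP; exists b.
by rewrite -mxOver_subFE AF bF eqxx.
Qed.

Lemma SdiagP X :
  reflect (exists A b, [/\ A \is a mxOver F1, b \in F2 & X = utri A 0 b]) (X \in S).
Proof.
rewrite inE; apply: (iffP existsP) => [[A /existsP [b]] | [A [b [AF bF ->]]]].
  by rewrite -mxOver_subFE => /and3P [AF bF /eqP->]; exists A, b.
by exists A; apply/existsP; exists b; rewrite -mxOver_subFE AF bF eqxx.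
Qed.

Lemma JradP X : reflect (exists v, X = utri 0 v 0) (X \in J).
Proof.
rewrite inE /utri [_%:M]raddf0.
by apply: (iffP existsP) => [[v /eqP->] | [v ->]]; exists v.
Qed.

Lemma utri_Aring A v b : A \is a mxOver F1 -> b \in F2 -> utri A v b \in R.
Proof. by move=> AF bF; apply/AringP; exists A, v, b. Qed.

Lemma utri_Sdiag A b : A \is a mxOver F1 -> b \in F2 -> utri A 0 b \in S.
Proof. by move=> AF bF; apply/SdiagP; exists A, b. Qed.

Lemma utri_Jrad v : utri 0 v 0 \in J.
Proof. by apply/JradP; exists v. Qed.

Lemma Aring_subring : is_subring R.
Proof.
split; first by rewrite -utri0 utri_Aring ?mxOver0_subF ?subF0.
split=> _ _ /AringP [A [v [b [AF bF ->]]]] /AringP [A' [v' [b' [A'F b'F ->]]]].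
  by rewrite utriB utri_Aring ?mxOverB_subF ?subFB.
by rewrite utri_mul utri_Aring ?mxOverM_subF ?subFM.
Qed.

Lemma Sdiag_subring : is_subring S.
Proof.
split; first by rewrite -utri0 utri_Sdiag ?mxOver0_subF ?subF0.
split=> _ _ /SdiagP [A [b [AF bF ->]]] /SdiagP [A' [b' [A'F b'F ->]]].
  by rewrite utriB subrr utri_Sdiag ?mxOverB_subF ?subFB.
by rewrite utri_mul mulmx0 scaler0 addr0 utri_Sdiag ?mxOverM_subF ?subFM.
Qed.

Lemma Sdiag_sub : S \subset R.
Proof. by apply/subsetP => _ /SdiagP [A [b [AF bF ->]]]; apply: utri_Aring. Qed.

Lemma Jrad_sub : J \subset R.
Proof. by apply/subsetP => _ /JradP [v ->]; rewrite utri_Aring ?mxOver0_subF ?subF0. Qed.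

Lemma Jrad_ideal : is_ideal R J.
Proof.
split; first exact: Jrad_sub.
split; first by rewrite -utri0 utri_Jrad.
split=> [_ _ /JradP [v ->] /JradP [v' ->] | ]; first by rewrite utriB !subrr utri_Jrad.
move=> _ _ /AringP [A [v [b [_ _ ->]]]] /JradP [w ->].
by rewrite !utri_mul mulmx0 mul0mx mulr0 mul0r !utri_Jrad.
Qed.

Lemma Sdiag_Jrad : S :&: J = [set 0].
Proof.
apply/setP => X; rewrite in_setI in_set1; apply/andP/eqP => [[] | ->].
  by case/SdiagP => [A [b [_ _ ->]]] /JradP [v] /utri_inj [-> _ ->]; rewrite utri0.
by rewrite -utri0 utri_Jrad utri_Sdiag ?mxOver0_subF ?subF0.
Qed.

Lemma utri_oplusJ Y A v v' b : utri A v b \in Y -> utri A v' b \in oplusJ Y J.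
Proof.
move=> YX; apply/imset2P; exists (utri A v b) (utri 0 (v' - v) 0); rewrite ?utri_Jrad //.
by rewrite utriD !addr0 addrC subrK.
Qed.

Lemma oplusJ_utri Y A v b : utri A v b \in oplusJ Y J -> exists v', utri A v' b \in Y.
Proof.
case/imset2P => y _ yY /JradP [x ->] Ey; exists (v - x).
by rewrite -[y](addrK (utri 0 x 0)) -Ey utriB !subr0 in yY.
Qed.

Lemma complement_of_lift Y : is_subring Y -> Y \subset R -> S \subset oplusJ Y J ->
  Y :&: J = [set 0] -> Y \in complements R J.
Proof.
move=> subY sYR sSY YJ; apply/(complementsP _ Aring_subring Jrad_sub); split => //.
apply/eqP; rewrite eqEsubset (oplusJ_sub Aring_subring Jrad_sub sYR) /=.
apply/subsetP => _ /AringP [A [v [b [AF bF ->]]]].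
have /oplusJ_utri [v' Yv'] := subsetP sSY _ (utri_Sdiag AF bF).
exact: utri_oplusJ Yv'.
Qed.

(* Conjugation by the unit 1 + x_w, whose inverse is 1 - x_w since x_w^2 = 0. *)
Definition twist w X : T := (1 - utri 0 w 0) * X * (1 + utri 0 w 0).

Lemma twist_utri w A v b : twist w (utri A v b) = utri A (v + (A *m w - b *: w)) b.
Proof.
rewrite /twist -utri1 utriB utriD !subr0 sub0r !addr0 add0r !utri_mul.
by rewrite !mul1mx mulmx1 mul1r mulr1 scale1r scalerN addrCA.
Qed.

Lemma twist0 w : twist w 0 = 0.
Proof. by rewrite /twist mulr0 mul0r. Qed.

Lemma twistB w : {morph twist w : X Y / X - Y}.
Proof. by move=> X Y; rewrite /twist mulrBr mulrBl. Qed.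

Lemma twistM w : {morph twist w : X Y / X * Y}.
Proof.
have inv : (1 + utri 0 w 0) * (1 - utri 0 w 0) = 1.
  rewrite mulrBr mulr1 mulrDl mul1r utri_mul !mul0mx scale0r addr0 mulr0 utri0.
  by rewrite addr0 addrK.
by move=> X Y; rewrite /twist -!mulrA (mulrA _ (1 - _)) inv mul1r.
Qed.

Definition Tw w : {set T} := twist w @: S.

Lemma utri_Tw w A b :
  A \is a mxOver F1 -> b \in F2 -> utri A (A *m w - b *: w) b \in Tw w.
Proof. by move=> AF bF; rewrite -[_ - _]add0r -twist_utri imset_f ?utri_Sdiag. Qed.

Lemma Tw_complement w : Tw w \in complements R J.
Proof.
apply: complement_of_lift.
- apply: subring_imset; [exact: Sdiag_subring | exact: twist0 | |].
  + by move=> X Y _ _; apply: twistB.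
  + by move=> X Y _ _; apply: twistM.
- apply/subsetP => _ /imsetP [_ /SdiagP [A [b [AF bF ->]]] ->].
  by rewrite twist_utri utri_Aring.
- apply/subsetP => _ /SdiagP [A [b [AF bF ->]]].
  exact: utri_oplusJ (utri_Tw w AF bF).
apply/setP => X; rewrite in_setI in_set1; apply/andP/eqP => [[] | ->].
  case/imsetP => _ /SdiagP [A [b [_ _ ->]]] -> /JradP [v].
  by rewrite twist_utri => /utri_inj [-> _ ->]; rewrite mul0mx scale0r subrr addr0 utri0.
split; last by rewrite -utri0 utri_Jrad.
by rewrite -(twist0 w) imset_f // -utri0 utri_Sdiag ?mxOver0_subF ?subF0.
Qed.

Lemma complementsE : complements R J = Tw @: setT.
Proof.
apply/setP => T0; apply/idP/imsetP => [T0c | [w _ ->]]; last exact: Tw_complement.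
have [sT0R [_ [T0B T0M]] T0J T0R] := (complementsP _ Aring_subring Jrad_sub).1 T0c.
have [w T0w] : exists w, utri 1%:M w 0 \in T0.
  apply: (oplusJ_utri (v := 0)); rewrite T0R utri_Aring ?mxOver1_subF ?subF0 //.
exists w => //.
apply: (complements_sub_eq Aring_subring Jrad_sub T0c (Tw_complement w)).
(* The commutator of r with (1 w; 0 0) lies in T0 :&: J = 0, which forces r into T_w. *)
apply/subsetP => r rT; have /AringP [A [v [b [AF bF Er]]]] := subsetP sT0R _ rT.
have : utri 1%:M w 0 * r - r * utri 1%:M w 0 \in T0 :&: J.
  rewrite inE T0B ?T0M //= Er !utri_mul utriB mul1mx mulmx1 mul1mx mul0r mulr0.
  by rewrite scale0r addr0 !subrr utri_Jrad.
rewrite T0J inE Er !utri_mul utriB mul1mx mulmx1 mul1mx mul0r mulr0 scale0r addr0 !subrr.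
rewrite -utri0 => /eqP /utri_inj [_ /eqP vE _].
have -> : v = A *m w - b *: w by apply/eqP; rewrite -subr_eq0 opprB addrA.
exact: utri_Tw.
Qed.

Lemma Tw_inj : injective Tw.
Proof.
move=> w w' Eww'; have : twist w (utri 1%:M 0 0) \in Tw w'.
  by rewrite -Eww' imset_f ?utri_Sdiag ?mxOver1_subF ?subF0.
case/imsetP => _ /SdiagP [A [b [_ _ ->]]]; rewrite !twist_utri.
by case/utri_inj => <- Ew b0; move: Ew; rewrite -b0 !mul1mx !scale0r !subr0 !add0r.
Qed.

Lemma card_complements : #|complements R J| = (#|F| ^ n)%N.
Proof.
by rewrite complementsE card_imset; [rewrite cardsT card_mx muln1 | apply: Tw_inj].
Qed.

Hypothesis n_gt0 : (0 < n)%N.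

Definition admissible (Mc : {set {set T}}) :=
  (forall M, M \in Mc -> maximal_subring S M) /\
  (\bigcup_(x in J :\ 0) centr S x) \subset (\bigcup_(M in Mc) M).

Lemma utri_const1_Jrad0 : utri 0 (const_mx 1) 0 \in J :\ 0.
Proof.
rewrite in_setD1 utri_Jrad andbT -utri0.
apply/negP => /eqP /utri_inj [_ /matrixP/(_ (Ordinal n_gt0) 0) + _].
by rewrite !mxE; apply/eqP; rewrite oner_eq0.
Qed.

Lemma Jrad_neq0 : J != [set 0].
Proof. by apply: contraTneq utri_const1_Jrad0 => ->; rewrite setDv inE. Qed.

Lemma oplusJ_proper M : proper_subring S M ->
  proper_subring R (oplusJ M J) /\ J \subset oplusJ M J.
Proof.
move=> [subM pMS]; have sMS := proper_sub pMS.
have sMR := subset_trans sMS Sdiag_sub.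
split; last by case: subM => M0 _; apply: sub_oplusJr.
split; first exact: oplusJ_subring Jrad_ideal sMR subM.
rewrite properE (oplusJ_sub Aring_subring Jrad_sub sMR) /=.
apply: contra (proper_subn pMS) => sRM.
by rewrite -(oplusJIl Sdiag_subring sMS Sdiag_Jrad) subsetI subxx (subset_trans Sdiag_sub sRM).
Qed.

Lemma utri_comm_Jrad A b w :
  (utri A 0 b * utri 0 w 0 == utri 0 w 0 * utri A 0 b) = (A *m w == b *: w).
Proof.
rewrite !utri_mul !mulmx0 !mul0mx mulr0 mul0r scaler0 addr0 add0r.
by apply/eqP/eqP => [/utri_inj [_ -> _] | ->].
Qed.

Lemma centr_utri A b w : (utri A 0 b \in centr S (utri 0 w 0)) =
  [&& A \is a mxOver F1, b \in F2 & A *m w == b *: w].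
Proof.
rewrite in_centr utri_comm_Jrad andbA; congr (_ && _).
apply/SdiagP/andP => [[A' [b' [A'F b'F /utri_inj [-> _ ->]]]] // | [AF bF]].
by exists A, b.
Qed.

Lemma cover_complements_oplusJ Mc : admissible Mc ->
  is_cover R (complements R J :|: [set oplusJ M J | M in Mc]).
Proof.
move=> [maxMc centrMc].
have memb Y : Y \in complements R J :|: [set oplusJ M J | M in Mc] ->
    proper_subring R Y /\ [set 0] \subset Y.
  case/setUP => [Yc | /imsetP [M /maxMc [pM _] ->]].
    have pY := complement_proper Aring_subring Jrad_sub Yc Jrad_neq0.
    by split => //; rewrite sub1set; case: pY => -[].
  have [pMJ sJMJ] := oplusJ_proper pM.
  by split; rewrite // sub1set (subsetP sJMJ) // -utri0 utri_Jrad.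
split=> //; apply/eqP; rewrite eqEsubset; apply/andP; split.
  by apply/bigcupsP => Y /memb [[_ /proper_sub]].
apply/subsetP => _ /AringP [A [v [b [AF bF ->]]]].
pose eigen := [pred w : 'cV[F]_n | (w != 0) && (A *m w == b *: w)].
have [w /andP [w_neq0 /eqP Aw] | no_eigen] := pickP eigen.
  have : utri A 0 b \in \bigcup_(x in J :\ 0) centr S x.
    apply/bigcupP; exists (utri 0 w 0); last by rewrite centr_utri AF bF Aw eqxx.
    rewrite in_setD1 utri_Jrad andbT -utri0; apply: contra w_neq0 => /eqP /utri_inj [_ -> _].
    exact: eqxx.
  case/(subsetP centrMc)/bigcupP => M MMc MA.
  apply/bigcupP; exists (oplusJ M J); last exact: utri_oplusJ MA.
  by apply/setUP; right; apply: imset_f.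
pose f w := (A - b%:M) *m w.
have f_inj : injective f.
  move=> w w' /eqP; rewrite -subr_eq0 -mulmxBr => fw0; apply/eqP; rewrite -subr_eq0.
  apply: contraFT (no_eigen (w - w')) => nz; rewrite /= nz /= -subr_eq0.
  by rewrite -mul_scalar_mx -mulmxBl.
have [g fK gK] := injF_bij f_inj.
apply/bigcupP; exists (Tw (g v)).
  by rewrite in_setU complementsE; apply/orP; left; apply: imset_f.
by rewrite -[v in utri _ v _]gK /f mulmxBl mul_scalar_mx utri_Tw.
Qed.

Lemma centr_proper x : x \in J :\ 0 -> proper_subring S (centr S x).
Proof.
case/setD1P => x_neq0 xJ; have [S0 [SB SM]] := Sdiag_subring.
split.
  split; first by rewrite in_centr S0 mul0r mulr0 eqxx.
  split=> s s'; rewrite !in_centr => /andP [sS /eqP sx] /andP [s'S /eqP s'x].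
    by rewrite SB //= mulrBl mulrBr sx s'x.
  by rewrite SM //= -mulrA s'x mulrA sx mulrA.
rewrite properE; apply/andP; split; first by apply/subsetP => s; rewrite in_centr => /andP [].
apply/subsetPn; exists (utri 0 0 1); first by rewrite utri_Sdiag ?mxOver0_subF ?subF1.
case/JradP: xJ x_neq0 => w ->; rewrite centr_utri mul0mx scale1r.
by apply: contra => /and3P [_ _ /eqP<-]; rewrite utri0.
Qed.

Lemma centrZ c x : c != 0 -> centr S (c *: x) = centr S x.
Proof.
move=> c_neq0; apply/setP => s; rewrite !in_centr; congr (_ && _).
rewrite -!mulmxE -scalemxAr -scalemxAl; apply/eqP/eqP => [|-> //].
exact: scalerI.
Qed.

Lemma card_Jrad : #|J| = (#|F| ^ n)%N.
Proof.
have -> : J = [set utri 0 v 0 | v in [set: 'cV[F]_n]].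
  apply/setP => X; apply/idP/imsetP => [/JradP [v ->] | [v _ ->]]; last exact: utri_Jrad.
  by exists v.
rewrite card_in_imset; first by rewrite cardsT card_mx muln1.
by move=> v v' _ _ /utri_inj [].
Qed.

Lemma card_centr_Jrad :
  (#|[set centr S x | x in J :\ 0%R]| * (#|F| - 1) <= #|J| - 1)%N.
Proof.
have [_ [J0 _]] := Jrad_ideal.
rewrite (cardsD1 (0 : T) J) J0 add1n subSS subn0.
apply: card_fibres_leq => x xJ0; have [x_neq0 xJ] := setD1P xJ0.
have scaleJ0 c : c \in [set~ 0] -> c *: x \in J :\ 0 /\ centr S (c *: x) = centr S x.
  rewrite in_setC1 => c_neq0.
  rewrite in_setD1 centrZ // scaler_eq0 (negbTE c_neq0) (negbTE x_neq0).
  by case/JradP: xJ => w ->; rewrite utriZ scaler0 mulr0 utri_Jrad.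
have scale_inj : {in [set~ 0] &, injective (fun c : F => c *: x)}.
  move=> c c' _ _ /eqP; rewrite -subr_eq0 -scalerBl scaler_eq0 (negbTE x_neq0) orbF subr_eq0.
  by move/eqP.
rewrite subn1 -(cardsC1 (0 : F)) -(card_in_imset scale_inj).
apply: subset_leq_card; apply/subsetP => _ /imsetP [c c0 ->].
by have [cxJ0 cxC] := scaleJ0 c c0; rewrite in_set cxJ0 cxC eqxx.
Qed.

Lemma admissible_maxsub_centr :
  admissible [set maxsub S C | C in [set centr S x | x in J :\ 0]].
Proof.
split=> [_ /imsetP [_ /imsetP [x xJ0 ->] ->] | ].
  exact: (maxsubP (centr_proper xJ0)).1.
apply/bigcupsP => x xJ0; apply/subsetP => s sC; apply/bigcupP.
exists (maxsub S (centr S x)); first by rewrite imset_f ?imset_f.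
exact: (subsetP (maxsubP (centr_proper xJ0)).2).
Qed.

Lemma minimal_admissible_card (Mc : {set {set T}}) :
  (forall Mc', admissible Mc' -> (#|Mc| <= #|Mc'|)%N) ->
  (#|Mc| <= (#|J| - 1) %/ (#|F| - 1))%N.
Proof.
move=> minMc; have F1_gt0 : (0 < #|F| - 1)%N by rewrite subn_gt0 finNzRing_gt1.
rewrite leq_divRL //; apply: leq_trans card_centr_Jrad; apply: leq_mul => //.
exact: leq_trans (minMc _ admissible_maxsub_centr) (leq_imset_card _ _).
Qed.

Hypotheses (d1_gt0 : (0 < d1)%N) (d2_gt0 : (0 < d2)%N).
Hypothesis cardF : #|F| = (p ^ lcmn d1 d2)%N.

Lemma lift_Aring Y u : is_subring Y -> S \subset oplusJ Y J ->
  u != 0 -> utri 0 u 0 \in Y -> R \subset Y.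
Proof.
move=> subY sSY u_neq0 uY; have [Y0 [YB YM]] := subY.
have liftS A b : A \is a mxOver F1 -> b \in F2 -> exists v, utri A v b \in Y.
  by move=> AF bF; apply: (oplusJ_utri (v := 0)); apply: (subsetP sSY); apply: utri_Sdiag.
pose W := [set v | utri 0 v 0 \in Y].
have WT : W = setT.
  apply: (cV_submod_eqT pcF d1_gt0 d2_gt0 cardF (u := u)); rewrite ?inE //.
  - by rewrite utri0.
  - by move=> v v'; rewrite !inE => vY v'Y; have := YB _ _ vY v'Y; rewrite utriB !subrr.
  - move=> A v AF; rewrite !inE => vY; have [v' v'Y] := liftS A 0 AF (subF0 pcF _).
    by have := YM _ _ v'Y vY; rewrite utri_mul mulmx0 mulr0 scale0r addr0.
  - move=> b v bF; rewrite !inE => vY; have [v' v'Y] := liftS 0 b mxOver0_subF bF.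
    by have := YM _ _ vY v'Y; rewrite utri_mul !mul0mx mul0r add0r.
apply/subsetP => _ /AringP [A [v [b [AF bF ->]]]].
have [v' v'Y] := liftS A b AF bF.
have : utri 0 (v - v') 0 \in Y by have := in_setT (v - v'); rewrite -WT inE.
by move/(subringD subY v'Y); rewrite utriD !addr0 addrC subrK.
Qed.

Lemma lift_cases Y : is_subring Y -> Y \subset R -> S \subset oplusJ Y J ->
  R \subset Y \/ Y \in complements R J.
Proof.
move=> subY sYR sSY.
pose inJ := [pred u : 'cV[F]_n | (u != 0) && (utri 0 u 0 \in Y)].
have [u /andP [u_neq0 uY] | noJ] := pickP inJ.
  by left; apply: lift_Aring uY.
right; apply: complement_of_lift => //.
apply/setP => X; rewrite in_setI in_set1; apply/andP/eqP => [[XY /JradP [u EX]] | ->].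
  by move: (noJ u) XY; rewrite EX /= => /nandP [/negbNE/eqP-> | /negbTE->] //; rewrite utri0.
by case: subY => Y0 _; rewrite Y0 -utri0 utri_Jrad.
Qed.

Definition twist_preim w Y : {set T} := [set s in S | twist w s \in Y].

Lemma cover_mod_Jrad_preim (C0 : {set {set T}}) w : is_cover R C0 -> Tw w \notin C0 ->
  cover_mod R J [set oplusJ (twist_preim w Y) J | Y in C0].
Proof.
move=> [memC0 C0R] TwC0.
have [_ _ _ TwJR] := (complementsP _ Aring_subring Jrad_sub).1 (Tw_complement w).
have notTw Y : Y \in C0 -> ~~ (Tw w \subset Y).
  move=> YC0; apply/negP => sTY; have [[subY pY] _] := memC0 Y YC0.
  have sSY : S \subset oplusJ Y J.
    by rewrite (subset_trans Sdiag_sub) // -TwJR imset2S.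
  case: (lift_cases subY (proper_sub pY) sSY) => [sRY | Yc].
    by rewrite properE sRY andbF in pY.
  move: TwC0; rewrite (complements_sub_eq Aring_subring Jrad_sub (Tw_complement w) Yc sTY).
  by rewrite YC0.
have memD Z : Z \in [set oplusJ (twist_preim w Y) J | Y in C0] -> proper_subring R Z /\ J \subset Z.
  case/imsetP => Y YC0 ->; apply: oplusJ_proper; have [[subY _] _] := memC0 Y YC0.
  split.
    apply: subring_preimset => //; [exact: Sdiag_subring | exact: twist0 | |].
      by move=> X X' _ _; apply: twistB.
    by move=> X X' _ _; apply: twistM.
  rewrite properE; apply/andP; split; first by apply/subsetP => s; rewrite in_set => /andP [].
  apply: contra (notTw Y YC0) => sSY'; apply/subsetP => _ /imsetP [s sS ->].
  by have := subsetP sSY' s sS; rewrite in_set => /andP [].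
split=> //; apply/eqP; rewrite eqEsubset; apply/andP; split.
  by apply/bigcupsP => Z /memD [[_ /proper_sub]].
apply/subsetP => _ /AringP [A [v [b [AF bF ->]]]].
have /bigcupP [Y YC0 TY] : utri A (A *m w - b *: w) b \in \bigcup_(Y in C0) Y.
  by rewrite C0R utri_Aring.
apply/bigcupP; exists (oplusJ (twist_preim w Y) J); first exact: imset_f.
by apply: (@utri_oplusJ _ _ 0); rewrite in_set utri_Sdiag //= twist_utri add0r.
Qed.

Lemma complements_sub_cover (C0 : {set {set T}}) : is_cover R C0 ->
  (forall k, is_sigma_mod R J k -> (#|C0| < k)%N) -> complements R J \subset C0.
Proof.
move=> covC0 C0_lt; rewrite complementsE; apply/subsetP => _ /imsetP [w _ ->].
apply/negPn/negP => TwC0.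
have [k sigk le_k] := cover_mod_sigma (cover_mod_Jrad_preim covC0 TwC0).
by have := C0_lt k sigk; rewrite ltnNge (leq_trans le_k) ?leq_imset_card.
Qed.

Lemma image_modJ_proper Y : proper_subring R Y -> Y \notin complements R J ->
  proper_subring S (oplusJ Y J :&: S).
Proof.
move=> [subY pY] Yc; have sYR := proper_sub pY.
split; first exact: subringI (oplusJ_subring Jrad_ideal sYR subY) Sdiag_subring.
rewrite properE subsetIr /= subsetI subxx andbT; apply/negP => sSY.
case: (lift_cases subY sYR sSY) => [sRY | ]; last exact/negP.
by rewrite properE sRY andbF in pY.
Qed.

Lemma admissible_of_cover (C0 : {set {set T}}) : is_cover R C0 ->
  admissible [set maxsub S (oplusJ Y J :&: S) | Y in C0 :\: complements R J].
Proof.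
move=> covC0; have [memC0 C0R] := covC0.
have pdiag Y : Y \in C0 :\: complements R J -> proper_subring S (oplusJ Y J :&: S).
  by case/setDP => YC0 Yc; apply: image_modJ_proper Yc; case: (memC0 Y YC0).
split=> [_ /imsetP [Y YC ->] | ]; first exact: (maxsubP (pdiag Y YC)).1.
apply/bigcupsP => x /setD1P [x_neq0 /JradP [u Ex]]; subst x; apply/subsetP => s sC.
move: (sC); rewrite in_centr => /andP [/SdiagP [A [b [AF bF Es]]] _].
move: sC; rewrite Es centr_utri AF bF /= => /eqP Au.
have u_neq0 : u != 0 by apply: contraNneq x_neq0 => ->; rewrite utri0.
pose f w := (A - b%:M) *m w.
have [v _ v_notin] : exists2 v, v \in [set: 'cV[F]_n] & v \notin f @: setT.
  apply/subsetPn; apply: contra u_neq0 => sTf.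
  have /imset_injP f_inj : #|f @: setT| == #|[set: 'cV[F]_n]|.
    by rewrite eqn_leq leq_imset_card subset_leq_card.
  by rewrite -(f_inj u 0) ?inE // /f mulmx0 mulmxBl mul_scalar_mx Au subrr.
have /bigcupP [Y YC0 vY] : utri A v b \in \bigcup_(Y in C0) Y by rewrite C0R utri_Aring.
have YC : Y \in C0 :\: complements R J.
  rewrite in_setD YC0 andbT complementsE; apply/imsetP => -[w _ EY].
  move: vY; rewrite EY => /imsetP [_ /SdiagP [A' [b' [_ _ ->]]]]; rewrite twist_utri add0r.
  case/utri_inj => <- Ev Eb; rewrite -Eb in Ev; move/negP: v_notin; apply.
  by rewrite Ev -mul_scalar_mx -mulmxBl imset_f.
apply/bigcupP; exists (maxsub S (oplusJ Y J :&: S)); first by apply/imsetP; exists Y.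
apply: (subsetP (maxsubP (pdiag Y YC)).2).
by rewrite in_setI (utri_oplusJ (v := v)) // utri_Sdiag.
Qed.

Lemma sigma_lower_bound (Mc : {set {set T}}) :
  (forall Mc', admissible Mc' -> (#|Mc| <= #|Mc'|)%N) -> sigma_elementary R ->
  exists k, is_sigma R k /\ (#|complements R J| + #|Mc| <= k)%N.
Proof.
move=> minMc SE; have [k [[[C0 [covC0 cardC0]] minC] ltk]] := SE J Jrad_ideal Jrad_neq0.
exists k; split; first by split; first exists C0.
have sCC0 : complements R J \subset C0 by apply: complements_sub_cover; rewrite // cardC0.
rewrite -cardC0 -(setIidPr sCC0) -leq_subRL ?subset_leq_card ?subsetIl //.
rewrite -cardsD; apply: leq_trans (minMc _ (admissible_of_cover covC0)) _.
exact: leq_imset_card.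
Qed.

Lemma admissible_gt0 (Mc : {set {set T}}) : admissible Mc -> (0 < #|Mc|)%N.
Proof.
case=> _ centrMc; have : 0 \in \bigcup_(x in J :\ 0) centr S x.
  apply/bigcupP; exists (utri 0 (const_mx 1) 0); first exact: utri_const1_Jrad0.
  by rewrite in_centr mul0r mulr0 eqxx andbT; case: Sdiag_subring.
by case/(subsetP centrMc)/bigcupP => M MMc _; apply/card_gt0P; exists M.
Qed.

End ARing.

Lemma geom_divnS q m : (1 < q)%N ->
  (q ^ m + (q ^ m - 1) %/ (q - 1) = (q ^ m.+1 - 1) %/ (q - 1))%N.
Proof.
move=> q_gt1; have q_pos : (0 < q ^ m)%N by rewrite expn_gt0 ltnW.
rewrite -divnMDl ?subn_gt0 // expnS.
by have -> : (q ^ m * (q - 1) + (q ^ m - 1) = q * q ^ m - 1)%N by nia.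
Qed.

Theorem proposition3p3 (p d1 d2 n : nat) (F : finFieldType)
  (Mc : {set {set 'M[F]_(n + 1)}}) :
  prime p -> (0 < d1)%N -> (0 < d2)%N -> (1 <= n)%N ->
  p \in [pchar F] -> #|F| = (p ^ lcmn d1 d2)%N ->
  let q1 := (p ^ d1)%N in let q2 := (p ^ d2)%N in let q := (p ^ lcmn d1 d2)%N in
  let R := @Aring F n q1 q2 in
  let S := @Sdiag F n q1 q2 in
  let J := @Jrad F n in
  let admissible (Mc' : {set {set 'M[F]_(n + 1)}}) :=
    (forall M, M \in Mc' -> maximal_subring S M) /\
    (\bigcup_(x in J :\ 0) centr S x) \subset (\bigcup_(M in Mc') M) in
  admissible Mc ->
  (forall Mc', admissible Mc' -> (#|Mc| <= #|Mc'|)%N) ->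
  let Z := [set oplusJ M J | M in Mc] in
  [/\ is_cover R (complements R J :|: Z),
      sigma_elementary R -> is_minimal_cover R (complements R J :|: Z),
      (#|Z| <= (#|J| - 1) %/ (q - 1))%N /\
        ((#|J| - 1) %/ (q - 1) = (q ^ n - 1) %/ (q - 1))%N &
      sigma_elementary R ->
        exists k, is_sigma R k /\ (q ^ n + 1 <= k)%N /\
                  (k <= (q ^ n.+1 - 1) %/ (q - 1))%N].
Proof.
move=> _ d1_gt0 d2_gt0 n_gt0 pcF cardF q1 q2 q R S J adm admMc minMc Z.
have q_gt1 : (1 < q)%N by rewrite /q -cardF finNzRing_gt1.
have covRZ := cover_complements_oplusJ pcF n_gt0 admMc.
have cardC : #|complements R J| = (q ^ n)%N.
  by rewrite (card_complements n d1 d2 pcF) cardF.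
have cardMc : (#|Mc| <= (q ^ n - 1) %/ (q - 1))%N.
  by have := minimal_admissible_card pcF minMc; rewrite card_Jrad cardF.
have cardCZ : (#|complements R J :|: Z| <= q ^ n + #|Mc|)%N.
  by rewrite -cardC (leq_trans (leq_card_setU _ _)) // leq_add2l leq_imset_card.
have sigmaR SE := sigma_lower_bound pcF n_gt0 d1_gt0 d2_gt0 cardF minMc SE.
split.
- exact: covRZ.
- move=> /sigmaR [k [[_ minC] le_k]]; rewrite cardC in le_k; split=> // C' covC'.
  exact: leq_trans cardCZ (leq_trans le_k (minC C' covC')).
- by rewrite card_Jrad cardF; split=> //; apply: leq_trans (leq_imset_card _ _) cardMc.
move=> /sigmaR [k [sigk le_k]]; rewrite cardC in le_k; exists k; split=> //; split.
  by apply: leq_trans le_k; rewrite leq_add2l (admissible_gt0 pcF n_gt0 admMc).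
apply: leq_trans (sigk.2 _ covRZ) _; apply: leq_trans cardCZ _.
by rewrite -geom_divnS // leq_add2l.
Qed.
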